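(* Let $\Gamma$ be a rationally metrised graph and $N\colon\mathrm H^1(\Gamma)\xrightarrow{\sim}\mathrm H_1(\Gamma)$ the isomorphism induced by the cycle pairing. For every edge $e$ of $\Gamma$, \[N(e^* )=\sum_{e'\in E^+}\lambda_{e,e'}\,e'\in\mathbb Q\cdot E^\pm,\qquad \lambda_{e,e'}=\begin{cases}\frac1{\ell(e)}-\frac{\langle\partial(e),\partial(e)\rangle}{\ell(e)^2}&\text{if }e'=e,\\ -\frac{\langle\partial(e),\partial(e')\rangle}{\ell(e)\ell(e')}&\text{if }e'\ne e^{\pm1}.\end{cases}\]
   Context: Rationally metrised graph: finite sets of vertices $V$, oriented edges $E$, half-edges, source $s$, fixed-point-free involution $e\mapsto e^{-1}$ on $E$, $t(e)=s(e^{-1})$, connected, lengths $\ell(e)=\ell(e^{-1})\in\mathbb Q_{>0}$. $E^+$ is the set of unoriented edges ($E$ modulo $e\sim e^{-1}$), each represented by a chosen orientation. $\mathbb Q\cdot E^\pm$ is the span of $E$ mod $e^{-1}=-e$ with edges orthogonal and $\langle e,e\rangle=\ell(e)$; $\partial(e)=t(e)-s(e)\in\mathrm{Div}^0(\Gamma)$ (divisors of total mass $0$); $\mathrm H_1(\Gamma)=\ker\partial$ with restricted (cycle) pairing and $\mathrm H^1(\Gamma)=\mathrm{Hom}(\mathrm H_1(\Gamma),\mathbb Q)$; $N(\xi)$ is the unique class with $\langle N(\xi),\omega\rangle=\xi(\omega)$ for all $\omega\in\mathrm H_1$. $e^*\in\mathrm H^1(\Gamma)$ gives the multiplicity of $e$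 in a homology class. $\langle\cdot,\cdot\rangle$ on $\mathrm{Div}^0$ is the height pairing ${}^t\mathbf uL^{-1}\mathbf v$ with $L$ the Laplacian matrix ($L_{uu}=\sum_{s(e)=u\ne t(e)}1/\ell(e)$, $L_{uv}=-\sum_{s(e)=u,t(e)=v}1/\ell(e)$ for $u\neq v$). *)

From HB Require Import structures.
From mathcomp Require Import all_boot all_order all_algebra.
Set Implicit Arguments. Unset Strict Implicit. Unset Printing Implicit Defensive.
Import Order.TTheory GRing.Theory Num.Theory.
Local Open Scope ring_scope.

(* A rationally metrised graph: vertices 'I_n, oriented edges a finType E,
   source s, fixed-point-free involution inv, lengths ell. *)
Section MetrisedGraph.
Variables (n : nat) (E : finType) (s : E -> 'I_n) (inv : E -> E) (ell : E -> rat).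

Definition tgt (e : E) : 'I_n := s (inv e).

Definition is_involution_fpf : Prop :=
  (forall e, inv (inv e) = e) /\ (forall e, inv e != e).

Definition adj : rel 'I_n := fun u v => [exists e, (s e == u) && (tgt e == v)].
Definition connected_graph : Prop := forall u v : 'I_n, connect adj u v.

Definition good_lengths : Prop :=
  (forall e, 0 < ell e) /\ (forall e, ell (inv e) = ell e).

(* Q.E^{+-}: rational functions on oriented edges with x(e^-1) = - x(e) *)
Definition antisym (x : {ffun E -> rat}) : bool :=
  [forall e, x (inv e) == - x e].

(* the class of the oriented edge e' in Q.E^{+-} *)
Definition edgevec (e' : E) : {ffun E -> rat} :=
  [ffun a => (a == e')%:R - (a == inv e')%:R].

(* cycle pairing: edges orthogonal, <e,e> = ell e (each unoriented edge
   is counted twice in the sum over oriented edges, hence the 1/2) *)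
Definition epair (x y : {ffun E -> rat}) : rat :=
  2^-1 * \sum_(a : E) ell a * x a * y a.

(* divisors as row vectors indexed by vertices *)
Definition bdry (x : {ffun E -> rat}) : 'rV[rat]_n :=
  \row_(v < n) \sum_(a : E | tgt a == v) x a.

Definition bdry_edge (e : E) : 'rV[rat]_n :=
  \row_(v < n) ((v == tgt e)%:R - (v == s e)%:R).

Definition in_H1 (x : {ffun E -> rat}) : bool := antisym x && (bdry x == 0).

Definition laplacian : 'M[rat]_n :=
  \matrix_(u < n, v < n)
    if u == v then \sum_(a : E | (s a == u) && (tgt a != u)) (ell a)^-1
    else - \sum_(a : E | (s a == u) && (tgt a == v)) (ell a)^-1.

(* height pairing  ^t u L^{-1} v  on Div^0 (L^{-1} realised by the
   pseudo-inverse: w := v L^+ satisfies w L = v for v of degree 0) *)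
Definition hpair (u v : 'rV[rat]_n) : rat :=
  (u *m (v *m pinvmx laplacian)^T) 0 0.

Definition lambda (e e' : E) : rat :=
  if e' == e then (ell e)^-1 - hpair (bdry_edge e) (bdry_edge e) / (ell e ^+ 2)
  else - hpair (bdry_edge e) (bdry_edge e') / (ell e * ell e').

(* E^+ : a set of representatives, exactly one orientation per edge *)
Definition orientation (Eplus : {set E}) : Prop :=
  forall e, (e \in Eplus) != (inv e \in Eplus).

(* x is N(e^* ): the class in H_1 with <x, w> = e^*(w) = w(e) for all w in H_1 *)
Definition is_N_estar (e : E) (x : {ffun E -> rat}) : Prop :=
  in_H1 x /\ forall w, in_H1 w -> epair x w = w e.

End MetrisedGraph.

(* Let w be a potential with w L = d(e): it exists because on a connected
   graph the kernel of the Laplacian consists of the constants, so its image is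
   the whole of Div^0.  The current j(a) = (w(t a) - w(s a)) / l(a) then
   satisfies Kirchhoff's law d(j) = w L = d(e), so (e - j) / l(e) is a cycle;
   and j, being a gradient, is orthogonal to every cycle, whence
   <(e - j) / l(e), z> = z(e); it is the only such cycle since the cycle
   pairing is positive definite.  Expanding j in the edge basis, its coefficient
   at e' is w(t e') - w(s e') = <d(e), d(e')> divided by l(e'), which yields
   the coefficients lambda_{e,e'}. *)

From HB Require Import structures.
From mathcomp Require Import all_boot all_order all_algebra.
From mathcomp Require Import ring zify.
Set Implicit Arguments. Unset Strict Implicit. Unset Printing Implicit Defensive.
Import Order.TTheory GRing.Theory Num.Theory.
Local Open Scope ring_scope.

Lemma sumr_delta (R : pzSemiRingType) (T : finType) (F : T -> R) (c : T) :
  \sum_i F i * (c == i)%:R = F c.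
Proof.
rewrite (bigD1 c) //= eqxx mulr1 big1 ?addr0 // => i; rewrite eq_sym => /negbTE ->.
by rewrite mulr0.
Qed.

Section MetrisedGraphTheory.
Variables (n : nat) (E : finType) (s : E -> 'I_n) (inv : E -> E) (ell : E -> rat).
Hypothesis inv_fpf : is_involution_fpf inv.
Hypothesis ell_good : good_lengths inv ell.

Local Notation t := (tgt s inv).
Local Notation L := (laplacian s inv ell).
Local Notation antisym := (antisym inv).
Local Notation bdry := (bdry s inv).
Local Notation in_H1 := (in_H1 s inv).
Local Notation epair := (epair ell).
Local Notation edgevec := (edgevec inv).
Local Notation bdry_edge := (bdry_edge s inv).
Local Notation ones := (const_mx 1 : 'rV[rat]_n).

Implicit Types (x y z : {ffun E -> rat}) (w : 'rV[rat]_n).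

Lemma invK : involutive inv. Proof. by case: inv_fpf. Qed.
Lemma tgt_inv a : t (inv a) = s a. Proof. by rewrite /tgt invK. Qed.
Lemma ell_inv a : ell (inv a) = ell a. Proof. by case: ell_good. Qed.
Lemma ell_gt0 a : 0 < ell a. Proof. by case: ell_good. Qed.
Lemma ell_neq0 a : ell a != 0. Proof. exact/lt0r_neq0/ell_gt0. Qed.

Lemma sum_inv (F : E -> rat) : \sum_a F (inv a) = \sum_a F a.
Proof. by rewrite [RHS](reindex_inj (inv_inj invK)). Qed.

Lemma antisymP x : reflect (forall a, x (inv a) = - x a) (antisym x).
Proof. by apply: (iffP forallP) => x_anti a; apply/eqP. Qed.

Lemma antisymB x y : antisym x -> antisym y -> antisym (x - y).
Proof.
move=> /antisymP x_anti /antisymP y_anti; apply/antisymP => a.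
by rewrite !ffunE x_anti y_anti opprB addrC opprK.
Qed.

Lemma bdryB x y : bdry (x - y) = bdry x - bdry y.
Proof.
by apply/rowP => v; rewrite !mxE -sumrB; apply: eq_bigr => a _; rewrite !ffunE.
Qed.

Lemma in_H1B x y : in_H1 x -> in_H1 y -> in_H1 (x - y).
Proof.
case/andP => x_anti /eqP x_cyc /andP[y_anti /eqP y_cyc].
by rewrite /in_H1 antisymB // bdryB x_cyc y_cyc subrr eqxx.
Qed.

Lemma in_H1Ml c x : in_H1 x -> in_H1 [ffun a => c * x a].
Proof.
case/andP => /antisymP x_anti /eqP x_cyc; apply/andP; split.
  by apply/antisymP => a; rewrite !ffunE x_anti mulrN.
apply/eqP/rowP => v; have /rowP/(_ v) := x_cyc; rewrite !mxE => x_cyc_v.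
by under eq_bigr do rewrite ffunE; rewrite -mulr_sumr x_cyc_v mulr0.
Qed.

Lemma sum_coboundary_antisym (h : 'I_n -> rat) z : antisym z ->
  \sum_a (h (t a) - h (s a)) * z a = 2 * \sum_v h v * bdry z 0 v.
Proof.
move=> /antisymP z_anti.
have src_tgt : \sum_a h (s a) * z a = - \sum_a h (t a) * z a.
  rewrite -sum_inv -sumrN; apply: eq_bigr => a _.
  by rewrite z_anti mulrN.
under eq_bigr do rewrite mulrBl.
rewrite sumrB src_tgt opprK mulr2n mulrDl mul1r; congr (_ + _);
  rewrite (partition_big t predT) //; apply: eq_bigr => v _; rewrite mxE mulr_sumr;
  by apply: eq_bigr => a /eqP ->.
Qed.

Lemma epair_sym x y : epair x y = epair y x.
Proof. by congr (_ * _); apply: eq_bigr => a _; rewrite mulrAC. Qed.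

Lemma epairBl x y z : epair (x - y) z = epair x z - epair y z.
Proof.
rewrite /epair -mulrBr -sumrB; congr (_ * _); apply: eq_bigr => a _.
by rewrite !ffunE mulrBr mulrBl.
Qed.

Lemma epairMl c x z : epair [ffun a => c * x a] z = c * epair x z.
Proof.
rewrite /epair [RHS]mulrCA; congr (_ * _); rewrite mulr_sumr; apply: eq_bigr => a _.
by rewrite ffunE; ring.
Qed.

Lemma epair_eq0 x : epair x x = 0 -> x = 0.
Proof.
have terms_ge0 a : true -> 0 <= ell a * x a * x a.
  by rewrite -mulrA -expr2 mulr_ge0 ?sqr_ge0 // ltW ?ell_gt0.
rewrite /epair => /eqP; rewrite mulf_eq0 invr_eq0 pnatr_eq0 /= => /eqP.
move/(psumr_eq0P terms_ge0) => terms_eq0; apply/ffunP => a.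
have /eqP := terms_eq0 a isT.
by rewrite -mulrA mulf_eq0 (negbTE (ell_neq0 a)) mulf_eq0 orbb ffunE => /eqP.
Qed.

Definition current w : {ffun E -> rat} := [ffun a => (w 0 (t a) - w 0 (s a)) / ell a].

Lemma current_antisym w : antisym (current w).
Proof. by apply/antisymP => a; rewrite !ffunE tgt_inv ell_inv -mulNr opprB. Qed.

Lemma laplacian_entry u v :
  L u v = \sum_a (s a == u)%:R * ((s a == v)%:R - (t a == v)%:R) / ell a.
Proof.
rewrite mxE; case: eqVneq => [<- | neq_uv].
  rewrite big_mkcond; apply: eq_bigr => a _ /=.
  by case: (s a == u); case: (t a == u); rewrite /=; ring.
rewrite big_mkcond -sumrN; apply: eq_bigr => a _ /=.
case: (eqVneq (s a) u) => [-> | _] /=; last by rewrite !mul0r oppr0.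
by rewrite (negbTE neq_uv); case: (t a == v); rewrite /=; ring.
Qed.

Lemma bdry_current w : bdry (current w) = w *m L.
Proof.
apply/rowP => v; rewrite !mxE.
have -> : \sum_u w 0 u * L u v =
    \sum_a w 0 (s a) * ((s a == v)%:R - (t a == v)%:R) / ell a.
  under eq_bigr do rewrite laplacian_entry mulr_sumr.
  rewrite exchange_big; apply: eq_bigr => a _ /=.
  set D := (_ - _); rewrite -(sumr_delta (fun u => w 0 u * D / ell a) (s a)).
  by apply: eq_bigr => u _; ring.
rewrite big_mkcond; under [RHS]eq_bigr do rewrite mulrBr mulrBl.
rewrite sumrB -[X in X - _]sum_inv -sumrB; apply: eq_bigr => a _ /=.
by rewrite ffunE ell_inv /tgt; case: (s (inv a) == v); rewrite /=; ring.
Qed.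

Lemma epair_current w z : antisym z ->
  epair (current w) z = \sum_v w 0 v * bdry z 0 v.
Proof.
move=> z_anti; rewrite /epair.
under eq_bigr => a _ do rewrite ffunE mulrCA mulfV ?ell_neq0 // mulr1.
by rewrite sum_coboundary_antisym // mulrA mulVf // mul1r.
Qed.

Lemma laplacian_form w1 w2 :
  (w1 *m L *m w2^T) 0 0 = epair (current w1) (current w2).
Proof.
rewrite -bdry_current epair_sym epair_current ?current_antisym // mxE.
by apply: eq_bigr => v _; rewrite [w2^T _ _]mxE mulrC.
Qed.

Lemma laplacian_ones : L *m ones^T = 0.
Proof.
apply/colP => u; have := laplacian_form (delta_mx 0 u) ones.
have -> : current ones = 0 by apply/ffunP => a; rewrite !ffunE !mxE subrr mul0r.
rewrite -mulmxA -rowE mxE => ->.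
by rewrite /epair mxE big1 ?mulr0 // => a _; rewrite !ffunE mulr0.
Qed.

Lemma laplacian_eq0_current w : w *m L = 0 -> current w = 0.
Proof. by move=> wL0; apply: epair_eq0; rewrite -laplacian_form wL0 mul0mx mxE. Qed.

Hypothesis graph_connected : connected_graph s inv.

Lemma laplacian_eq0_const w : w *m L = 0 -> forall u v, w 0 u = w 0 v.
Proof.
move=> /laplacian_eq0_current/ffunP cur0 u v; have /connectP[p] := graph_connected u v.
elim: p u => [|y p IHp] u /=; first by move=> _ ->.
case/andP => /existsP[a /andP[/eqP <- /eqP <-]] path_p last_p.
have /eqP := cur0 a; rewrite !ffunE mulf_eq0 invr_eq0 (negbTE (ell_neq0 a)) orbF.
by rewrite subr_eq0 => /eqP <-; apply: IHp.
Qed.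

Lemma degree0_sub_laplacian w : w *m ones^T = 0 -> (w <= L)%MS.
Proof.
move=> w_deg0; case: (pickP (@predT 'I_n)) => [v0 _ | no_vertex]; last first.
  suff -> : w = 0 by exact: sub0mx.
  by apply/rowP => v; have := no_vertex v.
have ones_neq0 : ones != 0 by apply/eqP => /rowP/(_ v0)/eqP; rewrite !mxE oner_eq0.
have ker_sub : (kermx L <= ones)%MS.
  apply/row_subP => i; set r := row i (kermx L).
  have rL0 : r *m L = 0 by rewrite -row_mul mulmx_ker row0.
  have -> : r = r 0 v0 *: ones.
    by apply/rowP => v; rewrite (laplacian_eq0_const rL0 v v0) !mxE mulr1.
  exact/scalemx_sub/submx_refl.
have rank_L : (n - 1 <= \rank L)%N.
  have := leq_trans (mxrankS ker_sub) (rank_leq_row ones).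
  rewrite mxrank_ker; lia.
have L_sub : (L <= kermx ones^T)%MS by apply/sub_kermxP; exact: laplacian_ones.
have ker_sub_L : (kermx ones^T <= L)%MS.
  by rewrite -(geq_leqif (mxrank_leqif_sup L_sub)) mxrank_ker mxrank_tr rank_rV ones_neq0.
by apply: submx_trans ker_sub_L; exact/sub_kermxP.
Qed.

Lemma dot_bdry_edge w e : (w *m (bdry_edge e)^T) 0 0 = w 0 (t e) - w 0 (s e).
Proof.
rewrite mxE; under eq_bigr => v _ do rewrite !mxE (eq_sym v) (eq_sym v) mulrBr.
by rewrite sumrB !sumr_delta.
Qed.

Lemma bdry_edge_degree0 e : bdry_edge e *m ones^T = 0.
Proof.
apply/rowP => i; rewrite ord1 -[bdry_edge e]trmxK -trmx_mul mxE dot_bdry_edge.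
by rewrite !mxE subrr.
Qed.

Definition potential e := bdry_edge e *m pinvmx L.

Lemma potential_laplacian e : potential e *m L = bdry_edge e.
Proof. exact/mulmxKpV/degree0_sub_laplacian/bdry_edge_degree0. Qed.

Lemma hpair_bdry_edge e e' :
  hpair s inv ell (bdry_edge e) (bdry_edge e') = potential e 0 (t e') - potential e 0 (s e').
Proof.
rewrite /hpair -/(potential e') -[bdry_edge e]potential_laplacian laplacian_form.
rewrite epair_current ?current_antisym // bdry_current potential_laplacian.
by rewrite -dot_bdry_edge [RHS]mxE; apply: eq_bigr => v _; rewrite [_^T _ _]mxE.
Qed.

Lemma lambda_current e e' :
  lambda s inv ell e e' = ((e' == e)%:R - current (potential e) e') / ell e.
Proof.
rewrite /lambda !hpair_bdry_edge ffunE.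
by case: (e' =P e) => [-> | _] /=; field; rewrite ?ell_neq0.
Qed.

Lemma edgevec_antisym e : antisym (edgevec e).
Proof.
apply/antisymP => a; rewrite !ffunE (inj_eq (inv_inj invK)) opprB.
by rewrite -{1}[e]invK (inj_eq (inv_inj invK)).
Qed.

Lemma bdry_edgevec e : bdry (edgevec e) = bdry_edge e.
Proof.
apply/rowP => v; rewrite !mxE big_mkcond.
transitivity (\sum_a ((t a == v)%:R * (e == a)%:R - (t a == v)%:R * (inv e == a)%:R) : rat).
  by apply: eq_bigr => a _; rewrite ffunE (eq_sym a) (eq_sym a); case: (t a == v); rewrite /=; ring.
by rewrite sumrB !sumr_delta tgt_inv !(eq_sym v).
Qed.

Lemma epair_edgevec e z : antisym z -> epair (edgevec e) z = ell e * z e.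
Proof.
move=> /antisymP z_anti; rewrite /epair.
transitivity (2^-1 * \sum_a (ell a * z a * (e == a)%:R - ell a * z a * (inv e == a)%:R)).
  by congr (_ * _); apply: eq_bigr => a _; rewrite ffunE (eq_sym a) (eq_sym a); ring.
by rewrite sumrB !sumr_delta ell_inv z_anti mulrN opprK; field.
Qed.

Definition N_estar e : {ffun E -> rat} :=
  [ffun a => (ell e)^-1 * (edgevec e - current (potential e)) a].

Lemma N_estar_H1 e : in_H1 (N_estar e).
Proof.
apply: in_H1Ml; apply/andP; split; first exact/antisymB/current_antisym/edgevec_antisym.
by rewrite bdryB bdry_edgevec bdry_current potential_laplacian subrr.
Qed.

Lemma epair_N_estar e z : in_H1 z -> epair (N_estar e) z = z e.
Proof.
case/andP => z_anti /eqP z_cyc.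
rewrite epairMl epairBl epair_edgevec // epair_current // z_cyc.
by rewrite big1 ?subr0 ?mulKf ?ell_neq0 // => v _; rewrite [X in _ * X]mxE mulr0.
Qed.

Lemma N_estar_unique e y : is_N_estar s inv ell e y -> y = N_estar e.
Proof.
case=> y_H1 y_pair; apply/eqP; rewrite -subr_eq0; apply/eqP/epair_eq0.
have d_H1 := in_H1B y_H1 (N_estar_H1 e).
by rewrite epairBl y_pair // epair_N_estar // subrr.
Qed.

Lemma sum_orientation (Eplus : {set E}) x a :
  orientation inv Eplus -> antisym x ->
  \sum_(e' in Eplus) x e' * edgevec e' a = x a.
Proof.
move=> Eplus_orient /antisymP x_anti.
have one_side e' : (e' \in Eplus)%:R + (inv e' \in Eplus)%:R = 1 :> rat.
  by have := Eplus_orient e'; case: (e' \in Eplus); case: (inv e' \in Eplus).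
rewrite big_mkcond /=.
transitivity (\sum_e' ((e' \in Eplus)%:R * x e' * (a == e')%:R -
                       (e' \in Eplus)%:R * x e' * (a == inv e')%:R)).
  by apply: eq_bigr => e' _; rewrite ffunE; case: (e' \in Eplus); rewrite /=; ring.
rewrite sumrB -[X in _ - X]sum_inv -sumrB -[RHS]sumr_delta.
by apply: eq_bigr => e' _; rewrite invK x_anti mulrN mulNr opprK -!mulrDl one_side mul1r.
Qed.

Lemma sum_lambda_edgevec (Eplus : {set E}) e :
  orientation inv Eplus -> e \in Eplus ->
  [ffun a => \sum_(e' in Eplus) lambda s inv ell e e' * edgevec e' a] = N_estar e.
Proof.
move=> Eplus_orient e_in; apply/ffunP => a; rewrite ffunE.
transitivity ((ell e)^-1 * (\sum_(e' in Eplus) (e' == e)%:R * edgevec e' a -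
   \sum_(e' in Eplus) current (potential e) e' * edgevec e' a)).
  by rewrite -sumrB mulr_sumr; apply: eq_bigr => e' _; rewrite lambda_current; ring.
rewrite sum_orientation ?current_antisym // (bigD1 e) //= eqxx mul1r big1.
  by rewrite addr0 !ffunE.
by move=> e' /andP[_ /negbTE ->]; rewrite mul0r.
Qed.

End MetrisedGraphTheory.

Theorem corollary7p3 (n : nat) (E : finType) (s : E -> 'I_n) (inv : E -> E)
    (ell : E -> rat)
    (Hinv : is_involution_fpf inv) (Hconn : connected_graph s inv)
    (Hell : good_lengths inv ell)
    (Eplus : {set E}) (HEplus : orientation inv Eplus)
    (e : E) (He : e \in Eplus) :
  let Ne := [ffun a => \sum_(e' in Eplus) lambda s inv ell e e' * edgevec inv e' a] in
  is_N_estar s inv ell e Ne /\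
  (forall y, is_N_estar s inv ell e y -> y = Ne).
Proof.
rewrite /= (sum_lambda_edgevec Hinv Hell Hconn HEplus He).
split; first split.
- exact: N_estar_H1.
- exact: epair_N_estar.
- exact: N_estar_unique.
Qed.
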